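(* For $\theta\in(-2\pi,2\pi)$ define $$f(\theta)=8\cosh^{-1}\!\left(\frac{\cos\left(\frac{\pi}{4}\right)+\cos^2\left(\frac{\pi}{4}+\frac{\theta}{16}\right)}{\sin^2\left(\frac{\pi}{4}+\frac{\theta}{16}\right)}\right)+8\cosh^{-1}\!\left(\frac{\cos\left(\frac{\pi}{4}\right)+\cos^2\left(\frac{\pi}{4}-\frac{\theta}{16}\right)}{\sin^2\left(\frac{\pi}{4}-\frac{\theta}{16}\right)}\right),$$ which is the sum of the perimeters of the regular hyperbolic octagons of areas $2\pi-\theta$ and $2\pi+\theta$. Then $f(\theta)\geq 2\cdot 8\cosh^{-1}(\sqrt{2}+1)$ for all $\theta\in(-2\pi,2\pi)$. *)

From Stdlib Require Import Reals.
Open Scope R_scope.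

Definition arcosh (x : R) : R := ln (x + sqrt (x ^ 2 - 1)).

Definition perim_sum (theta : R) : R :=
  8 * arcosh ((cos (PI / 4) + (cos (PI / 4 + theta / 16)) ^ 2)
               / (sin (PI / 4 + theta / 16)) ^ 2)
  + 8 * arcosh ((cos (PI / 4) + (cos (PI / 4 - theta / 16)) ^ 2)
               / (sin (PI / 4 - theta / 16)) ^ 2).

(* With a = PI/4 + theta/16, P = sin a ^ 2 and Q = cos a ^ 2, the two arguments of arcosh are
   X = (c + Q) / P and Y = (c + P) / Q, where c = cos (PI/4) = 1/sqrt 2 and P + Q = 1.
   The addition formula arcosh X + arcosh Y = arcosh (X Y + sqrt (X^2 - 1) sqrt (Y^2 - 1))
   reduces the theorem to an algebraic inequality in p = P Q, which ranges over (1/8, 1/4]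
   because 8 p = 1 + cos (theta/4).  Multiplied by p it becomes
   c (c + 1) sqrt (8 p - 1) >= c (c + 1) (8 p - 1), i.e. t <= sqrt t on [0, 1]. *)

From Stdlib Require Import Reals Lra Psatz.
Open Scope R_scope.

Lemma arcosh_add (x y : R) : 1 <= x -> 1 <= y ->
  arcosh x + arcosh y = arcosh (x * y + sqrt (x ^ 2 - 1) * sqrt (y ^ 2 - 1)).
Proof.
intros hx hy; unfold arcosh.
assert (ex : sqrt (x ^ 2 - 1) * sqrt (x ^ 2 - 1) = x ^ 2 - 1) by (apply sqrt_sqrt; nra).
assert (ey : sqrt (y ^ 2 - 1) * sqrt (y ^ 2 - 1) = y ^ 2 - 1) by (apply sqrt_sqrt; nra).
pose proof (sqrt_pos (x ^ 2 - 1)); pose proof (sqrt_pos (y ^ 2 - 1)).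
set (u := sqrt (x ^ 2 - 1)) in *; set (v := sqrt (y ^ 2 - 1)) in *.
assert (e : sqrt ((x * y + u * v) ^ 2 - 1) = x * v + y * u).
{ apply sqrt_lem_1.
  - assert (1 <= x * y + u * v) by nra; nra.
  - nra.
  - replace ((x * y + u * v) ^ 2 - 1)
      with (x * x * y * y + u * u * (v * v) + 2 * x * y * u * v - 1) by ring.
    replace ((x * v + y * u) * (x * v + y * u))
      with (x * x * (v * v) + y * y * (u * u) + 2 * x * y * u * v) by ring.
    rewrite ex, ey; ring. }
rewrite <- ln_mult by nra; rewrite e; f_equal; ring.
Qed.

Lemma arcosh_double (x : R) : 1 <= x -> 2 * arcosh x = arcosh (2 * x ^ 2 - 1).
Proof.
intros hx.
replace (2 * arcosh x) with (arcosh x + arcosh x) by ring.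
rewrite arcosh_add, sqrt_sqrt by nra.
f_equal; ring.
Qed.

Lemma arcosh_le (x y : R) : 1 <= x -> x <= y -> arcosh x <= arcosh y.
Proof.
intros hx hxy; unfold arcosh.
destruct (Req_dec x y) as [-> | hne]; [lra |].
left; apply ln_increasing.
- pose proof (sqrt_pos (x ^ 2 - 1)); lra.
- assert (sqrt (x ^ 2 - 1) <= sqrt (y ^ 2 - 1)) by (apply sqrt_le_1_alt; nra); lra.
Qed.

Lemma arcosh_sum_ge_double (x y k : R) : 1 <= x -> 1 <= y -> 1 <= k ->
  2 * k ^ 2 - 1 <= x * y + sqrt (x ^ 2 - 1) * sqrt (y ^ 2 - 1) ->
  2 * arcosh k <= arcosh x + arcosh y.
Proof.
intros hx hy hk hxy.
rewrite arcosh_add, arcosh_double by lra.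
apply arcosh_le; [nra | exact hxy].
Qed.

Lemma le_sqrt_self (t : R) : 0 <= t <= 1 -> t <= sqrt t.
Proof.
intros ht.
rewrite <- (sqrt_square t) at 1 by lra.
apply sqrt_le_1_alt; nra.
Qed.

Section OctagonRatios.

Variables c P Q X Y : R.
Hypothesis c_pos : 0 < c.
Hypothesis c_sq : c * c = 1 / 2.
Hypothesis P_pos : 0 < P.
Hypothesis Q_pos : 0 < Q.
Hypothesis PQ_sum : P + Q = 1.
Hypothesis PQ_prod : 1 <= 8 * (P * Q).
Hypothesis X_mul_P : X * P = c + Q.
Hypothesis Y_mul_Q : Y * Q = c + P.

Lemma ratios_ge_1 : 1 <= X /\ 1 <= Y.
Proof.
assert ((P - Q) * (P - Q) <= c * c) by nra.
assert (P - Q <= c /\ Q - P <= c) as [hPQ hQP] by (split; nra).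
split; nra.
Qed.

Lemma ratios_mul : X * Y * (P * Q) = c * c + c + P * Q.
Proof.
replace (X * Y * (P * Q)) with ((X * P) * (Y * Q)) by ring.
rewrite X_mul_P, Y_mul_Q.
replace Q with (1 - P) by lra; ring.
Qed.

Lemma ratios_sq_sub_1_mul :
  (X ^ 2 - 1) * (Y ^ 2 - 1) * (P * Q) ^ 2 = (c * (c + 1)) ^ 2 * (8 * (P * Q) - 1).
Proof.
replace ((X ^ 2 - 1) * (Y ^ 2 - 1) * (P * Q) ^ 2)
  with (((X * P) ^ 2 - P ^ 2) * ((Y * Q) ^ 2 - Q ^ 2)) by ring.
rewrite X_mul_P, Y_mul_Q.
replace (((c + Q) ^ 2 - P ^ 2) * ((c + P) ^ 2 - Q ^ 2))
  with ((c + (P + Q)) ^ 2 * (c * c - (P - Q) ^ 2)) by ring.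
replace ((c * (c + 1)) ^ 2 * (8 * (P * Q) - 1)) with ((c + 1) ^ 2 * (c * c) * (8 * (P * Q) - 1))
  by ring.
rewrite PQ_sum, c_sq.
replace Q with (1 - P) by lra; field.
Qed.

Lemma sqrt_ratios_mul :
  sqrt (X ^ 2 - 1) * sqrt (Y ^ 2 - 1) * (P * Q) = c * (c + 1) * sqrt (8 * (P * Q) - 1).
Proof.
destruct ratios_ge_1 as [hX hY].
assert (0 <= X ^ 2 - 1 /\ 0 <= Y ^ 2 - 1) as [hX2 hY2] by (split; nra).
rewrite <- sqrt_mult by assumption.
rewrite <- (sqrt_pow2 (P * Q)) at 1 by nra.
rewrite <- sqrt_mult by (try apply Rmult_le_pos; nra).
rewrite ratios_sq_sub_1_mul, sqrt_mult, sqrt_pow2 by nra.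
reflexivity.
Qed.

Lemma ratios_cosh_sum_ge : 2 * (2 * c + 1) ^ 2 - 1 <= X * Y + sqrt (X ^ 2 - 1) * sqrt (Y ^ 2 - 1).
Proof.
assert (p_le : 8 * (P * Q) - 1 <= 1) by (pose proof (pow2_ge_0 (P - Q)); nra).
pose proof (le_sqrt_self (8 * (P * Q) - 1) ltac:(lra)) as chord.
apply (Rmult_le_reg_r (P * Q)); [nra |].
rewrite Rmult_plus_distr_r, ratios_mul, sqrt_ratios_mul.
replace ((2 * (2 * c + 1) ^ 2 - 1) * (P * Q)) with ((8 * (c * c) + 8 * c + 1) * (P * Q)) by ring.
rewrite c_sq.
nra.
Qed.

End OctagonRatios.

Lemma octagon_angle_bound (theta : R) : -2 * PI < theta < 2 * PI ->
  1 < 8 * (sin (PI / 4 + theta / 16) ^ 2 * cos (PI / 4 + theta / 16) ^ 2).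
Proof.
intros htheta; set (a := PI / 4 + theta / 16).
assert (e8 : 2 * sin a * cos a = cos (theta / 8)).
{ rewrite <- sin_2a, cos_sin; f_equal; unfold a; field. }
assert (e4 : cos (theta / 4) = 2 * cos (theta / 8) * cos (theta / 8) - 1).
{ rewrite <- cos_2a_cos; f_equal; field. }
assert (cos (theta / 4) > 0) by (apply cos_gt_0; lra).
replace (8 * (sin a ^ 2 * cos a ^ 2)) with (2 * ((2 * sin a * cos a) * (2 * sin a * cos a)))
  by ring.
rewrite e8; lra.
Qed.

Lemma cos_PI4_sq : cos (PI / 4) * cos (PI / 4) = 1 / 2.
Proof.
rewrite cos_PI4.
replace (1 / sqrt 2 * (1 / sqrt 2)) with (1 / (sqrt 2 * sqrt 2)) by (field; apply sqrt2_neq_0).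
rewrite sqrt_sqrt; lra.
Qed.

Theorem lemma4p2 (theta : R) (h1 : -2 * PI < theta) (h2 : theta < 2 * PI) :
  perim_sum theta >= 2 * (8 * arcosh (sqrt 2 + 1)).
Proof.
unfold perim_sum.
replace (PI / 4 - theta / 16) with (PI / 2 - (PI / 4 + theta / 16)) by field.
rewrite sin_shift, cos_shift.
pose proof (octagon_angle_bound theta (conj h1 h2)) as hPQ.
set (a := PI / 4 + theta / 16) in *; set (c := cos (PI / 4)).
assert (hc : 0 < c) by (apply cos_gt_0; pose proof PI_RGT_0; lra).
assert (hcc : c * c = 1 / 2) by apply cos_PI4_sq.
assert (e2 : sqrt 2 = 2 * c) by (apply sqrt_lem_1; nra).
assert (hsum : sin a ^ 2 + cos a ^ 2 = 1) by (rewrite <- (sin2_cos2 a); unfold Rsqr; ring).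
pose proof (pow2_ge_0 (sin a)); pose proof (pow2_ge_0 (cos a)).
set (P := sin a ^ 2) in *; set (Q := cos a ^ 2) in *.
assert (0 < P /\ 0 < Q) as [hP hQ] by (split; nra).
assert (hX : (c + Q) / P * P = c + Q) by (field; lra).
assert (hY : (c + P) / Q * Q = c + P) by (field; lra).
destruct (ratios_ge_1 c P Q _ _ hc hcc hP hsum ltac:(lra) hX hY).
pose proof (ratios_cosh_sum_ge c P Q _ _ hc hcc hP hQ hsum ltac:(lra) hX hY).
pose proof (arcosh_sum_ge_double ((c + Q) / P) ((c + P) / Q) (2 * c + 1)).
rewrite e2; lra.
Qed.
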